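(* Let $n\ge 2$. For every $K>0$ there exists a polynomial $f\in\mathbb{R}[z_1,\dots,z_n]$ such that $\mathbb{R}^n\setminus\mathcal{I}(f)$ has at least $K$ connected components that are bounded and strictly convex.
   Context: For $f\in\mathbb{C}[z_1,\dots,z_n]$, $\mathcal{V}(f)\subseteq\mathbb{C}^n$ denotes its complex zero set and the imaginary projection of $f$ is $\mathcal{I}(f)=\{\Im(\mathbf z):\mathbf z\in\mathcal V(f)\}\subseteq\mathbb{R}^n$, where $\Im$ is taken componentwise. A convex set is strictly convex if its boundary contains no nondegenerate line segment. *)

From Stdlib Require Import Reals List.
Open Scope R_scope.

Definition C : Type := (R * R)%type.
Definition Re (z : C) : R := fst z.
Definition Im (z : C) : R := snd z.
Definition C0 : C := (0, 0).
Definition C1 : C := (1, 0).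
Definition Cadd (z w : C) : C := (fst z + fst w, snd z + snd w).
Definition Cmul (z w : C) : C :=
  (fst z * fst w - snd z * snd w, fst z * snd w + snd z * fst w).
Definition RtoC (c : R) : C := (c, 0).
Fixpoint Cpow (z : C) (k : nat) : C :=
  match k with O => C1 | S k' => Cmul z (Cpow z k') end.

(** A polynomial is a finite list of terms (c, e), c a real coefficient and
    e an exponent vector; the term denotes c * prod_(i<n) z_i ^ (nth i e 0).
    Every element of R[z_1..z_n] is represented (exponents beyond index n
    are ignored). *)
Definition mpoly : Type := list (R * list nat).

Fixpoint eval_mono (k : nat) (e : list nat) (z : nat -> C) : C :=
  match k with
  | O => C1
  | S k' => Cmul (eval_mono k' e z) (Cpow (z k') (nth k' e O))
  end.

Definition eval_poly (n : nat) (f : mpoly) (z : nat -> C) : C :=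
  fold_right (fun t acc => Cadd (Cmul (RtoC (fst t)) (eval_mono n (snd t) z)) acc)
             C0 f.

Definition inRn (n : nat) (x : nat -> R) : Prop :=
  forall i, (n <= i)%nat -> x i = 0.

Definition set_Rn := (nat -> R) -> Prop.

Definition imag_proj (n : nat) (f : mpoly) : set_Rn :=
  fun y => inRn n y /\
    exists z : nat -> C, eval_poly n f z = C0 /\
      forall i, (i < n)%nat -> Im (z i) = y i.

Definition compl_imag_proj (n : nat) (f : mpoly) : set_Rn :=
  fun y => inRn n y /\ ~ imag_proj n f y.

(** * Euclidean topology on R^n (via sup-norm balls, same topology). *)
Definition rn_ball (n : nat) (x : nat -> R) (r : R) : set_Rn :=
  fun y => inRn n y /\ forall i, (i < n)%nat -> Rabs (y i - x i) < r.

Definition rn_open (n : nat) (U : set_Rn) : Prop :=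
  forall x, U x -> exists r, r > 0 /\ forall y, rn_ball n x r y -> U y.

Definition rn_connected (n : nat) (S : set_Rn) : Prop :=
  ~ exists U V : set_Rn,
      rn_open n U /\ rn_open n V /\
      (forall x, S x -> U x \/ V x) /\
      (exists x, S x /\ U x) /\ (exists x, S x /\ V x) /\
      (forall x, S x -> U x -> V x -> False).

Definition rn_component (n : nat) (S Cc : set_Rn) : Prop :=
  (exists x, Cc x) /\
  (forall x, Cc x -> S x) /\
  rn_connected n Cc /\
  (forall T : set_Rn, rn_connected n T -> (forall x, Cc x -> T x) ->
      (forall x, T x -> S x) -> forall x, T x -> Cc x).

Definition rn_bounded (n : nat) (S : set_Rn) : Prop :=
  exists M, forall x, S x -> forall i, (i < n)%nat -> Rabs (x i) <= M.

Definition comb (a b : nat -> R) (t : R) : nat -> R :=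
  fun i => (1 - t) * a i + t * b i.

Definition rn_convex (n : nat) (S : set_Rn) : Prop :=
  forall a b t, S a -> S b -> 0 <= t <= 1 -> S (comb a b t).

Definition rn_closure (n : nat) (S : set_Rn) : set_Rn :=
  fun x => inRn n x /\ forall r, r > 0 -> exists y, rn_ball n x r y /\ S y.

Definition rn_interior (n : nat) (S : set_Rn) : set_Rn :=
  fun x => inRn n x /\ exists r, r > 0 /\ forall y, rn_ball n x r y -> S y.

Definition rn_boundary (n : nat) (S : set_Rn) : set_Rn :=
  fun x => rn_closure n S x /\ ~ rn_interior n S x.

Definition rn_strictly_convex (n : nat) (S : set_Rn) : Prop :=
  rn_convex n S /\
  ~ exists a b, inRn n a /\ inRn n b /\ (exists i, (i < n)%nat /\ a i <> b i) /\
      forall t, 0 <= t <= 1 -> rn_boundary n S (comb a b t).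

(* Take [f = (R + sum_i z_i^2) * prod_(j<K) (ell_j(z)^2 + 1 - eps sum_i z_i^2)] with
   [ell_j(z) = (2j+1) z_1 - 2 z_2].  Writing [z = x + iy], a zero of the first factor has
   [|y|^2 = R + |x|^2 >= R], and a zero of the j-th factor has [ell_j(y)^2 <= 1 + eps |y|^2],
   by comparing [(ell_j x ell_j y)^2 = eps^2 <x,y>^2] with Cauchy-Schwarz.  Conversely every
   purely imaginary point with [|y|^2 = R] or [ell_j(y)^2 = 1 + eps |y|^2] is a zero.  So for
   each k the set of y in the ball [|y|^2 < R] lying beyond all K hyperboloids, on the side of
   the lines [ell_j = 0] prescribed by k, avoids I(f) while its boundary lies in I(f): being
   open and convex, it is a connected component of the complement.  It is strictly convex
   because [y |-> sqrt (1 + eps |y|^2)] is strictly convex, and the point [(2, 2k)] shows that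
   the K regions are nonempty. *)

From Stdlib Require Import Reals List Lra Lia Psatz Classical FunctionalExtensionality.
Open Scope R_scope.

(** * Finite sums and the Euclidean inner product *)

Fixpoint rsum (m : nat) (g : nat -> R) : R :=
  match m with O => 0 | S k => rsum k g + g k end.

Lemma rsum_ext m g h : (forall i, (i < m)%nat -> g i = h i) -> rsum m g = rsum m h.
Proof.
  induction m as [|m IH]; intros H; simpl; [reflexivity|].
  rewrite IH by (intros; apply H; lia).
  rewrite H by lia; reflexivity.
Qed.

Lemma rsum_eq0 m g : (forall i, (i < m)%nat -> g i = 0) -> rsum m g = 0.
Proof.
  induction m as [|m IH]; intros H; simpl; [reflexivity|].
  rewrite IH by (intros; apply H; lia).
  rewrite H by lia; ring.
Qed.

Lemma rsum_nonneg m g : (forall i, (i < m)%nat -> 0 <= g i) -> 0 <= rsum m g.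
Proof.
  induction m as [|m IH]; intros H; simpl; [lra|].
  assert (0 <= rsum m g) by (apply IH; intros; apply H; lia).
  assert (0 <= g m) by (apply H; lia).
  lra.
Qed.

Lemma rsum_ge_term m g i :
  (forall j, (j < m)%nat -> 0 <= g j) -> (i < m)%nat -> g i <= rsum m g.
Proof.
  induction m as [|m IH]; intros H Hi; simpl; [lia|].
  assert (0 <= g m) by (apply H; lia).
  destruct (Nat.eq_dec i m) as [->|Hne].
  - assert (0 <= rsum m g) by (apply rsum_nonneg; intros; apply H; lia). lra.
  - assert (g i <= rsum m g) by (apply IH; [intros; apply H; lia|lia]). lra.
Qed.

Lemma rsum_first_two m g :
  (2 <= m)%nat -> (forall i, (2 <= i)%nat -> g i = 0) -> rsum m g = g O + g 1%nat.
Proof.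
  intros Hm Hg; induction m as [|m IH]; [lia|].
  destruct (Nat.eq_dec m 1) as [->|Hne]; simpl; [ring|].
  rewrite IH, (Hg m) by lia; ring.
Qed.

Definition sqnorm (n : nat) (a : nat -> R) : R := rsum n (fun i => a i * a i).
Definition dot (n : nat) (a b : nat -> R) : R := rsum n (fun i => a i * b i).

Lemma sqnorm_nonneg n a : 0 <= sqnorm n a.
Proof. apply rsum_nonneg; intros; nra. Qed.

Lemma sqnorm_ge_coord n a i : (i < n)%nat -> a i * a i <= sqnorm n a.
Proof. intros Hi; apply (rsum_ge_term n (fun j => a j * a j)); [intros; nra|exact Hi]. Qed.

Lemma sqnorm_lincomb n p q a b :
  sqnorm n (fun i => p * a i + q * b i) =
  p * p * sqnorm n a + 2 * p * q * dot n a b + q * q * sqnorm n b.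
Proof. unfold sqnorm, dot; induction n as [|n IH]; simpl; [|rewrite IH]; ring. Qed.

Lemma sqnorm_comb n a b t :
  sqnorm n (comb a b t) =
  (1 - t) * (1 - t) * sqnorm n a + 2 * (1 - t) * t * dot n a b + t * t * sqnorm n b.
Proof. apply sqnorm_lincomb. Qed.

Lemma sqnorm_sub n a b :
  sqnorm n (fun i => a i - b i) = sqnorm n a - 2 * dot n a b + sqnorm n b.
Proof. unfold sqnorm, dot; induction n as [|n IH]; simpl; [|rewrite IH]; ring. Qed.

Lemma sqnorm_sub_pos n a b i :
  (i < n)%nat -> a i <> b i -> 0 < sqnorm n a - 2 * dot n a b + sqnorm n b.
Proof.
  intros Hi Hab; rewrite <- sqnorm_sub.
  assert (a i - b i <> 0) by lra.
  eapply Rlt_le_trans; [|exact (sqnorm_ge_coord n _ i Hi)]; simpl; nra.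
Qed.

Lemma discriminant_nonpos A B D :
  0 <= B -> (forall l, 0 <= A - 2 * l * D + l * l * B) -> D * D <= A * B.
Proof.
  intros HB Hq.
  destruct (Req_dec B 0) as [H0|H0].
  - destruct (Req_dec D 0) as [HD|HD]; [subst; lra|].
    specialize (Hq ((A + 1) / (2 * D))); rewrite H0 in Hq.
    replace (A - 2 * ((A + 1) / (2 * D)) * D + (A + 1) / (2 * D) * ((A + 1) / (2 * D)) * 0)
      with (-1) in Hq by (field; exact HD).
    lra.
  - specialize (Hq (D / B)).
    replace (A - 2 * (D / B) * D + D / B * (D / B) * B) with ((A * B - D * D) / B) in Hq
      by (field; exact H0).
    assert (0 < B) by lra.
    apply Rmult_le_compat_r with (r := B) in Hq; [|lra].
    unfold Rdiv in Hq; rewrite Rmult_0_l, Rmult_assoc, Rinv_l in Hq; lra.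
Qed.

Lemma cauchy_schwarz n a b : dot n a b * dot n a b <= sqnorm n a * sqnorm n b.
Proof.
  apply discriminant_nonpos; [apply sqnorm_nonneg|].
  intros l; pose proof (sqnorm_nonneg n (fun i => 1 * a i + (- l) * b i)) as H.
  rewrite sqnorm_lincomb in H; nra.
Qed.

(** * Complex and polynomial arithmetic *)

Ltac csolve := repeat match goal with [ w : C |- _ ] => destruct w end;
  unfold Cadd, Cmul, RtoC, C1, C0; simpl; f_equal; ring.

Lemma Cmul_1_l w : Cmul C1 w = w. Proof. csolve. Qed.
Lemma Cmul_1_r w : Cmul w C1 = w. Proof. csolve. Qed.
Lemma Cmul_0_l w : Cmul C0 w = C0. Proof. csolve. Qed.
Lemma Cmul_0_r w : Cmul w C0 = C0. Proof. csolve. Qed.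
Lemma Cmul_assoc a b c : Cmul (Cmul a b) c = Cmul a (Cmul b c). Proof. csolve. Qed.
Lemma Cmul_mulACA a b c d : Cmul (Cmul a b) (Cmul c d) = Cmul (Cmul a c) (Cmul b d).
Proof. csolve. Qed.
Lemma Cadd_0_l w : Cadd C0 w = w. Proof. csolve. Qed.
Lemma Cadd_assoc a b c : Cadd (Cadd a b) c = Cadd a (Cadd b c). Proof. csolve. Qed.

Lemma Cpow_add w a b : Cpow w (a + b) = Cmul (Cpow w a) (Cpow w b).
Proof. induction a as [|a IH]; simpl; [rewrite Cmul_1_l|rewrite IH, Cmul_assoc]; reflexivity. Qed.

Lemma Cmul_eq0 a b : Cmul a b = C0 -> a = C0 \/ b = C0.
Proof.
  destruct a as [a1 a2], b as [b1 b2]; unfold Cmul, C0; simpl; intros [= H1 H2].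
  assert (Hn : (a1 * a1 + a2 * a2) * (b1 * b1 + b2 * b2) = 0).
  { transitivity ((a1 * b1 - a2 * b2) ^ 2 + (a1 * b2 + a2 * b1) ^ 2); [ring|].
    rewrite H1, H2; ring. }
  apply Rmult_integral in Hn as [Ha|Hb]; [left|right]; f_equal; nra.
Qed.

Fixpoint add_exp (e1 e2 : list nat) : list nat :=
  match e1, e2 with
  | nil, _ => e2
  | _, nil => e1
  | a :: r, b :: s => (a + b)%nat :: add_exp r s
  end.

Lemma nth_add_exp e1 e2 i : nth i (add_exp e1 e2) O = (nth i e1 O + nth i e2 O)%nat.
Proof.
  revert e2 i; induction e1; intros [|b e2] [|i]; simpl; auto; destruct i; simpl; lia.
Qed.

Lemma eval_mono_add k e1 e2 z :
  eval_mono k (add_exp e1 e2) z = Cmul (eval_mono k e1 z) (eval_mono k e2 z).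
Proof.
  induction k as [|k IH]; simpl; [csolve|].
  rewrite IH, nth_add_exp, Cpow_add; apply Cmul_mulACA.
Qed.

Lemma eval_mono_nil k z : eval_mono k nil z = C1.
Proof. induction k as [|k IH]; simpl; [|rewrite IH; destruct k]; csolve. Qed.

Lemma eval_poly_app n f g z :
  eval_poly n (f ++ g) z = Cadd (eval_poly n f z) (eval_poly n g z).
Proof.
  unfold eval_poly; rewrite fold_right_app; induction f as [|t f IH]; simpl.
  - rewrite Cadd_0_l; reflexivity.
  - rewrite IH, Cadd_assoc; reflexivity.
Qed.

Lemma eval_poly_cons n c e f z :
  eval_poly n ((c, e) :: f) z = Cadd (Cmul (RtoC c) (eval_mono n e z)) (eval_poly n f z).
Proof. reflexivity. Qed.

Definition pmul (f g : mpoly) : mpoly :=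
  flat_map (fun t => map (fun u => (fst t * fst u, add_exp (snd t) (snd u))) g) f.

Lemma eval_pmul n f g z : eval_poly n (pmul f g) z = Cmul (eval_poly n f z) (eval_poly n g z).
Proof.
  assert (Hterm : forall c e,
    eval_poly n (map (fun u => (c * fst u, add_exp e (snd u))) g) z =
    Cmul (Cmul (RtoC c) (eval_mono n e z)) (eval_poly n g z)).
  { intros c e; induction g as [|[c' e'] g IH]; [symmetry; apply Cmul_0_r|].
    simpl map; rewrite !eval_poly_cons, IH, eval_mono_add.
    generalize (eval_mono n e z) (eval_mono n e' z) (eval_poly n g z); intros; csolve. }
  induction f as [|[c e] f IH]; [symmetry; apply Cmul_0_l|].
  unfold pmul; simpl flat_map; fold (pmul f g).
  rewrite eval_poly_app, Hterm, IH, eval_poly_cons.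
  generalize (eval_mono n e z) (eval_poly n g z) (eval_poly n f z); intros; csolve.
Qed.

Fixpoint pprod (p : nat -> mpoly) (m : nat) : mpoly :=
  match m with O => (1, nil) :: nil | S m' => pmul (p m') (pprod p m') end.

Lemma eval_pprod_eq0 n p m z :
  eval_poly n (pprod p m) z = C0 <-> exists j, (j < m)%nat /\ eval_poly n (p j) z = C0.
Proof.
  induction m as [|m IH]; simpl.
  - unfold eval_poly; simpl; rewrite eval_mono_nil.
    split; [intros H; injection H; lra|intros [j [Hj _]]; lia].
  - rewrite eval_pmul; split.
    + intros H; apply Cmul_eq0 in H as [H|H]; [exists m; split; [lia|exact H]|].
      apply IH in H as [j [Hj H]]; exists j; split; [lia|exact H].
    + intros [j [Hj H]]; destruct (Nat.eq_dec j m) as [->|Hne].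
      * rewrite H; apply Cmul_0_l.
      * rewrite (proj2 IH) by (exists j; split; [lia|exact H]); apply Cmul_0_r.
Qed.

Definition var_exp (i d : nat) : list nat := repeat O i ++ d :: nil.

Lemma nth_var_exp i d j : nth j (var_exp i d) O = if Nat.eqb j i then d else O.
Proof.
  unfold var_exp; revert j; induction i as [|i IH]; intros [|j]; simpl; auto.
  destruct j; reflexivity.
Qed.

Lemma eval_mono_var k i d z :
  (i < k)%nat -> eval_mono k (var_exp i d) z = Cpow (z i) d.
Proof.
  assert (Hout : forall m, (m <= i)%nat -> eval_mono m (var_exp i d) z = C1).
  { induction m as [|m IH]; intros Hm; simpl; [reflexivity|].
    rewrite IH, nth_var_exp by lia.
    destruct (Nat.eqb_spec m i); [lia|]; csolve. }
  induction k as [|k IH]; intros Hi; simpl; [lia|].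
  rewrite nth_var_exp; destruct (Nat.eqb_spec k i) as [->|Hne].
  - rewrite Hout by lia; apply Cmul_1_l.
  - rewrite IH by lia; apply Cmul_1_r.
Qed.

(** * The polynomial and its imaginary projection *)

Definition re_vec (z : nat -> C) : nat -> R := fun i => Re (z i).
Definition im_vec (z : nat -> C) : nat -> R := fun i => Im (z i).

Definition sqsum_poly (c : R) (m : nat) : mpoly :=
  map (fun i => (c, var_exp i 2)) (seq 0 m).

Lemma eval_sqsum_poly n c m z : (m <= n)%nat ->
  eval_poly n (sqsum_poly c m) z =
  (c * (sqnorm m (re_vec z) - sqnorm m (im_vec z)), c * (2 * dot m (re_vec z) (im_vec z))).
Proof.
  induction m as [|m IH]; intros Hm.
  - cbn; unfold C0; f_equal; ring.
  - unfold sqsum_poly; rewrite seq_S, map_app, eval_poly_app; fold (sqsum_poly c m).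
    rewrite IH by lia; cbn [map]; rewrite eval_poly_cons, eval_mono_var by lia.
    unfold sqnorm, dot, re_vec, im_vec, Re, Im; cbn.
    destruct (z m); unfold Cadd, Cmul, RtoC, C1, C0; cbn; f_equal; ring.
Qed.

Definition ball_poly (n : nat) (r : R) : mpoly := (r, nil) :: sqsum_poly 1 n.

Definition ell (j : nat) (v : nat -> R) : R := (2 * INR j + 1) * v O - 2 * v 1%nat.

Definition line_poly (j : nat) : mpoly :=
  (2 * INR j + 1, var_exp 0 1) :: (-2, var_exp 1 1) :: nil.

Definition hyperbola_poly (n : nat) (e : R) (j : nat) : mpoly :=
  pmul (line_poly j) (line_poly j) ++ (1, nil) :: sqsum_poly (- e) n.

Lemma eval_ball_poly n r z :
  eval_poly n (ball_poly n r) z =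
  (r + (sqnorm n (re_vec z) - sqnorm n (im_vec z)), 2 * dot n (re_vec z) (im_vec z)).
Proof.
  unfold ball_poly; rewrite eval_poly_cons, eval_sqsum_poly, eval_mono_nil by lia.
  unfold Cadd, Cmul, RtoC, C1; cbn; f_equal; ring.
Qed.

Lemma eval_line_poly n j z : (2 <= n)%nat ->
  eval_poly n (line_poly j) z = (ell j (re_vec z), ell j (im_vec z)).
Proof.
  intros Hn; unfold line_poly; rewrite !eval_poly_cons, !eval_mono_var by lia.
  unfold ell, re_vec, im_vec, Re, Im; destruct (z O), (z 1%nat).
  unfold Cadd, Cmul, RtoC, C1, C0; cbn; f_equal; ring.
Qed.

Lemma eval_hyperbola_poly n e j z : (2 <= n)%nat ->
  let X := re_vec z in let Y := im_vec z in
  eval_poly n (hyperbola_poly n e j) z =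
  (ell j X * ell j X - ell j Y * ell j Y + 1 - e * (sqnorm n X - sqnorm n Y),
   2 * ell j X * ell j Y - e * (2 * dot n X Y)).
Proof.
  intros Hn X Y; subst X Y; unfold hyperbola_poly.
  rewrite eval_poly_app, eval_pmul, eval_line_poly, eval_poly_cons, eval_sqsum_poly,
    eval_mono_nil by lia.
  unfold Cadd, Cmul, RtoC, C1; cbn; f_equal; ring.
Qed.

Definition eps (K : nat) : R := / (2 * (1 + INR K * INR K)).
Definition radius (K : nat) : R := 4 * (1 + INR K * INR K) + 1.

Definition fpoly (n K : nat) : mpoly :=
  pmul (ball_poly n (radius K)) (pprod (hyperbola_poly n (eps K)) K).

Lemma eps_pos K : 0 < eps K.
Proof. unfold eps; apply Rinv_0_lt_compat; pose proof (pos_INR K); nra. Qed.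

(** The two equations are the real and imaginary parts of [ell(x+iy)^2 + 1 - e |x+iy|^2 = 0],
    with [Lx = ell x], [Ly = ell y], [X = |x|^2], [Y = |y|^2] and [D = <x,y>]. *)
Lemma hyperbola_root_bound e Lx Ly X Y D :
  0 < e -> 0 <= X -> 0 <= Y -> D * D <= X * Y ->
  Lx * Lx - Ly * Ly + 1 - e * (X - Y) = 0 -> 2 * Lx * Ly - e * (2 * D) = 0 ->
  Ly * Ly <= 1 + e * Y.
Proof.
  intros He HX HY HCS Hre Him; apply Rnot_lt_le; intros Hlt.
  assert (Lx * Lx > e * X) by lra.
  assert (HLL : (Lx * Lx) * (Ly * Ly) = e * e * (D * D))
    by (replace (Lx * Lx * (Ly * Ly)) with ((Lx * Ly) * (Lx * Ly)) by ring;
        replace (Lx * Ly) with (e * D) by lra; ring).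
  assert (0 <= e * X /\ 0 <= e * Y) as [HeX HeY] by (split; nra).
  assert ((Lx * Lx) * (Ly * Ly) > (e * X) * (Ly * Ly)) by nra.
  assert ((e * X) * (Ly * Ly) >= (e * X) * (e * Y)) by nra.
  assert (e * e * (D * D) <= e * e * (X * Y)) by (apply Rmult_le_compat_l; nra).
  nra.
Qed.

Lemma imag_proj_fpoly_bound n K y : (2 <= n)%nat -> imag_proj n (fpoly n K) y ->
  radius K <= sqnorm n y \/
  exists j, (j < K)%nat /\ ell j y * ell j y <= 1 + eps K * sqnorm n y.
Proof.
  intros Hn [_ [z [Hz HIm]]].
  assert (HY : forall i, (i < n)%nat -> im_vec z i = y i) by exact HIm.
  assert (HN : sqnorm n (im_vec z) = sqnorm n y)
    by (apply rsum_ext; intros i Hi; rewrite HY by exact Hi; reflexivity).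
  assert (HL : forall j, ell j (im_vec z) = ell j y)
    by (intros; unfold ell; rewrite !HY by lia; reflexivity).
  pose proof (sqnorm_nonneg n (re_vec z)).
  unfold fpoly in Hz; rewrite eval_pmul in Hz; apply Cmul_eq0 in Hz as [Hz|Hz].
  - left; rewrite eval_ball_poly in Hz; injection Hz; lra.
  - right; apply eval_pprod_eq0 in Hz as [j [Hj Hz]]; exists j; split; [exact Hj|].
    rewrite eval_hyperbola_poly in Hz by exact Hn; injection Hz; intros Him Hre.
    rewrite <- HL, <- HN.
    eapply hyperbola_root_bound; eauto using eps_pos, sqnorm_nonneg, cauchy_schwarz.
Qed.

Lemma imag_proj_fpoly_of_eq n K y : (2 <= n)%nat -> inRn n y ->
  sqnorm n y = radius K \/
  (exists j, (j < K)%nat /\ ell j y * ell j y = 1 + eps K * sqnorm n y) ->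
  imag_proj n (fpoly n K) y.
Proof.
  intros Hn Hy Hb; split; [exact Hy|].
  set (z := fun i => (0, y i) : C); exists z; split; [|reflexivity].
  assert (HX : re_vec z = fun _ => 0) by reflexivity.
  assert (HN : sqnorm n (fun _ => 0) = 0) by (apply rsum_eq0; intros; ring).
  assert (HD : dot n (fun _ => 0) y = 0) by (apply rsum_eq0; intros; ring).
  assert (HYz : im_vec z = y) by reflexivity.
  unfold fpoly; rewrite eval_pmul; destruct Hb as [Hb|[j [Hj Hb]]].
  - rewrite eval_ball_poly, HX, HYz, HN, HD, Hb, Rminus_0_l, Rplus_opp_r, Rmult_0_r.
    apply Cmul_0_l.
  - rewrite (proj2 (eval_pprod_eq0 _ _ _ _)); [apply Cmul_0_r|].
    exists j; split; [exact Hj|].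
    assert (HL : ell j (fun _ => 0) = 0) by (unfold ell; ring).
    rewrite eval_hyperbola_poly, HX, HYz, HN, HD, HL by exact Hn.
    unfold C0; f_equal; [lra|ring].
Qed.

(** * Topology of [R^n] *)

Lemma rn_ball_min n x r1 r2 y :
  rn_ball n x (Rmin r1 r2) y -> rn_ball n x r1 y /\ rn_ball n x r2 y.
Proof.
  intros [Hy H]; pose proof (Rmin_l r1 r2); pose proof (Rmin_r r1 r2).
  split; split; auto; intros i Hi; specialize (H i Hi); lra.
Qed.

Lemma rn_ball_center n x r : inRn n x -> 0 < r -> rn_ball n x r x.
Proof. intros Hx Hr; split; [exact Hx|]; intros; rewrite Rminus_diag, Rabs_R0; exact Hr. Qed.

Lemma Rabs_le_1_plus_sq x : Rabs x <= 1 + x * x.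
Proof. unfold Rabs; destruct (Rcase_abs x); nra. Qed.

Lemma rn_bounded_of_sqnorm_lt n S r : (forall y, S y -> sqnorm n y < r) -> rn_bounded n S.
Proof.
  intros H; exists (1 + r); intros y Sy i Hi.
  pose proof (Rabs_le_1_plus_sq (y i)); pose proof (sqnorm_ge_coord n y i Hi).
  specialize (H y Sy); lra.
Qed.

Definition continuous_at (n : nat) (F : (nat -> R) -> R) (x : nat -> R) : Prop :=
  forall e, 0 < e -> exists r, 0 < r /\ forall y, rn_ball n x r y -> Rabs (F y - F x) < e.

Lemma continuous_at_const n c x : continuous_at n (fun _ => c) x.
Proof. intros e He; exists 1; split; [lra|]; intros; rewrite Rminus_diag, Rabs_R0; exact He. Qed.

Lemma continuous_at_coord n i x : (i < n)%nat -> continuous_at n (fun y => y i) x.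
Proof. intros Hi e He; exists e; split; [exact He|]; intros y [_ Hy]; apply Hy, Hi. Qed.

Lemma continuous_at_opp n F x : continuous_at n F x -> continuous_at n (fun y => - F y) x.
Proof.
  intros HF e He; destruct (HF e He) as [r [Hr H]]; exists r; split; [exact Hr|].
  intros y Hy; replace (- F y - - F x) with (- (F y - F x)) by ring.
  rewrite Rabs_Ropp; auto.
Qed.

Lemma continuous_at_plus n F G x :
  continuous_at n F x -> continuous_at n G x -> continuous_at n (fun y => F y + G y) x.
Proof.
  intros HF HG e He.
  destruct (HF (e / 2)) as [r1 [Hr1 H1]]; [lra|].
  destruct (HG (e / 2)) as [r2 [Hr2 H2]]; [lra|].
  exists (Rmin r1 r2); split; [apply Rmin_pos; auto|].
  intros y Hy; apply rn_ball_min in Hy as [Hy1 Hy2].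
  specialize (H1 y Hy1); specialize (H2 y Hy2).
  replace (F y + G y - (F x + G x)) with ((F y - F x) + (G y - G x)) by ring.
  pose proof (Rabs_triang (F y - F x) (G y - G x)); lra.
Qed.

Lemma continuous_at_minus n F G x :
  continuous_at n F x -> continuous_at n G x -> continuous_at n (fun y => F y - G y) x.
Proof. intros HF HG; apply continuous_at_plus, continuous_at_opp; assumption. Qed.

Lemma continuous_at_mult n F G x :
  continuous_at n F x -> continuous_at n G x -> continuous_at n (fun y => F y * G y) x.
Proof.
  intros HF HG e He.
  set (M := Rabs (F x) + Rabs (G x) + 1).
  assert (HM : 1 <= M) by (unfold M; pose proof (Rabs_pos (F x)); pose proof (Rabs_pos (G x)); lra).
  set (d := Rmin 1 (e / M)).
  assert (Hd : 0 < d) by (apply Rmin_pos; [lra|apply Rdiv_lt_0_compat; lra]).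
  assert (Hd1 : d <= 1) by apply Rmin_l.
  assert (HdM : d * M <= e).
  { assert (d <= e / M) by apply Rmin_r.
    apply Rmult_le_compat_r with (r := M) in H; [|lra].
    unfold Rdiv in H; rewrite Rmult_assoc, Rinv_l, Rmult_1_r in H; lra. }
  destruct (HF d Hd) as [r1 [Hr1 H1]]; destruct (HG d Hd) as [r2 [Hr2 H2]].
  exists (Rmin r1 r2); split; [apply Rmin_pos; auto|].
  intros y Hy; apply rn_ball_min in Hy as [Hy1 Hy2].
  specialize (H1 y Hy1); specialize (H2 y Hy2).
  set (u := F y - F x) in *; set (v := G y - G x) in *.
  replace (F y * G y - F x * G x) with (u * v + F x * v + G x * u) by (unfold u, v; ring).
  pose proof (Rabs_triang (u * v + F x * v) (G x * u)).
  pose proof (Rabs_triang (u * v) (F x * v)).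
  rewrite !Rabs_mult in *.
  pose proof (Rabs_pos u); pose proof (Rabs_pos v);
  pose proof (Rabs_pos (F x)); pose proof (Rabs_pos (G x)).
  assert (Rabs u * Rabs v <= Rabs u) by nra.
  assert (Rabs (F x) * Rabs v <= Rabs (F x) * d) by nra.
  assert (Rabs (G x) * Rabs u <= Rabs (G x) * d) by nra.
  unfold M in HdM; nra.
Qed.

Lemma continuous_at_rsum n m (g : nat -> (nat -> R) -> R) x :
  (forall i, (i < m)%nat -> continuous_at n (g i) x) ->
  continuous_at n (fun y => rsum m (fun i => g i y)) x.
Proof.
  induction m as [|m IH]; intros H; simpl; [apply continuous_at_const|].
  apply continuous_at_plus; [apply IH; intros; apply H; lia|apply H; lia].
Qed.

Lemma continuous_at_sqnorm n x : continuous_at n (sqnorm n) x.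
Proof.
  apply (continuous_at_rsum n n (fun i y => y i * y i)); intros i Hi.
  apply continuous_at_mult; apply continuous_at_coord; exact Hi.
Qed.

Lemma continuous_at_pos n F x :
  continuous_at n F x -> 0 < F x -> exists r, 0 < r /\ forall y, rn_ball n x r y -> 0 < F y.
Proof.
  intros HF Hx; destruct (HF (F x) Hx) as [r [Hr H]]; exists r; split; [exact Hr|].
  intros y Hy; specialize (H y Hy); apply Rabs_def2 in H; lra.
Qed.

Lemma nbhd_forall_lt n x (P : nat -> (nat -> R) -> Prop) m :
  (forall j, (j < m)%nat -> exists r, 0 < r /\ forall y, rn_ball n x r y -> P j y) ->
  exists r, 0 < r /\ forall y, rn_ball n x r y -> forall j, (j < m)%nat -> P j y.
Proof.
  induction m as [|m IH]; intros H.
  - exists 1; split; [lra|]; intros; lia.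
  - destruct IH as [r1 [Hr1 H1]]; [intros; apply H; lia|].
    destruct (H m) as [r2 [Hr2 H2]]; [lia|].
    exists (Rmin r1 r2); split; [apply Rmin_pos; auto|].
    intros y Hy j Hj; apply rn_ball_min in Hy as [Hy1 Hy2].
    destruct (Nat.eq_dec j m) as [->|]; [apply H2; auto|apply H1; auto; lia].
Qed.

Lemma closure_nonneg n (S : set_Rn) F x :
  continuous_at n F x -> (forall y, S y -> 0 < F y) -> rn_closure n S x -> 0 <= F x.
Proof.
  intros HF HS [_ Hc]; apply Rnot_lt_le; intros Hlt.
  destruct (continuous_at_pos n (fun y => - F y) x) as [r [Hr H]];
    [apply continuous_at_opp, HF|lra|].
  destruct (Hc r Hr) as [y [Hy Sy]].
  specialize (H y Hy); specialize (HS y Sy); lra.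
Qed.

Lemma comb0 a b : comb a b 0 = a.
Proof. apply functional_extensionality; intros; unfold comb; ring. Qed.

Lemma comb1 a b : comb a b 1 = b.
Proof. apply functional_extensionality; intros; unfold comb; ring. Qed.

Lemma inRn_comb n a b t : inRn n a -> inRn n b -> inRn n (comb a b t).
Proof. intros Ha Hb i Hi; unfold comb; rewrite Ha, Hb by exact Hi; ring. Qed.

Lemma rn_ball_comb n a b s r : 0 < r -> inRn n a -> inRn n b ->
  exists d, 0 < d /\ forall u, Rabs (u - s) < d -> rn_ball n (comb a b s) r (comb a b u).
Proof.
  intros Hr Ha Hb.
  set (M := 1 + sqnorm n (fun i => b i - a i)).
  assert (HM : 0 < M) by (unfold M; pose proof (sqnorm_nonneg n (fun i => b i - a i)); lra).
  exists (r / M); split; [apply Rdiv_lt_0_compat; auto|].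
  intros u Hu; split; [apply inRn_comb; auto|]; intros i Hi.
  replace (comb a b u i - comb a b s i) with ((u - s) * (b i - a i)) by (unfold comb; ring).
  rewrite Rabs_mult.
  assert (Rabs (b i - a i) <= M).
  { pose proof (Rabs_le_1_plus_sq (b i - a i)).
    pose proof (sqnorm_ge_coord n (fun i => b i - a i) i Hi); unfold M; simpl in *; lra. }
  pose proof (Rabs_pos (u - s)); pose proof (Rabs_pos (b i - a i)).
  assert (Rabs (u - s) * Rabs (b i - a i) <= Rabs (u - s) * M) by (apply Rmult_le_compat_l; lra).
  assert (Rabs (u - s) * M < r / M * M) by (apply Rmult_lt_compat_r; lra).
  replace (r / M * M) with r in * by (field; lra); lra.
Qed.

(** The supremum [s] of the times [t] with [comb a b [0,t]] inside [U] can lie neither in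
    [U] nor in [V], since both are open. *)
Lemma convex_connected n (S : set_Rn) :
  (forall x, S x -> inRn n x) -> rn_convex n S -> rn_connected n S.
Proof.
  intros Hin Hcv [U [V [HU [HV [Hcov [[a [Sa Ua]] [[b [Sb Vb]] Hdis]]]]]]].
  pose proof (Hin a Sa) as Ha; pose proof (Hin b Sb) as Hb.
  set (E := fun t => 0 <= t <= 1 /\ forall u, 0 <= u <= t -> U (comb a b u)).
  assert (E0 : E 0).
  { split; [lra|]; intros u Hu; replace u with 0 by lra; rewrite comb0; exact Ua. }
  destruct (completeness E) as [s [Hub Hlub]].
  { exists 1; intros t [Ht _]; lra. }
  { exists 0; exact E0. }
  assert (Hs0 : 0 <= s) by (apply Hub; exact E0).
  assert (Hs1 : s <= 1) by (apply Hlub; intros t [Ht _]; lra).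
  assert (below : forall u, 0 <= u < s -> U (comb a b u)).
  { intros u Hu; apply NNPP; intros HnU.
    assert (s <= u); [|lra]. apply Hlub; intros t [Ht Htu].
    destruct (Rle_or_lt t u) as [|Hlt]; auto; exfalso; apply HnU, Htu; lra. }
  assert (Sc : S (comb a b s)) by (apply Hcv; auto).
  destruct (Hcov _ Sc) as [Us|Vs].
  - destruct (HU _ Us) as [r [Hr Hball]].
    destruct (rn_ball_comb n a b s r Hr Ha Hb) as [d [Hd Hnear]].
    destruct (Req_dec s 1) as [E1|E1].
    + rewrite E1, comb1 in Us; apply (Hdis b); auto.
    + set (t' := Rmin 1 (s + d / 2)).
      assert (Ht' : s < t' <= 1) by (unfold t', Rmin; destruct (Rle_dec 1 (s + d / 2)); lra).
      assert (Et' : E t').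
      { split; [lra|]; intros u Hu.
        destruct (Rlt_or_le u s) as [Hlt|Hge]; [apply below; lra|].
        apply Hball, Hnear; pose proof (Rmin_r 1 (s + d / 2)).
        apply Rabs_def1; unfold t' in Hu; lra. }
      assert (t' <= s) by (apply Hub; exact Et'); lra.
  - destruct (Req_dec s 0) as [Z|Z].
    + rewrite Z, comb0 in Vs; apply (Hdis a); auto.
    + destruct (HV _ Vs) as [r [Hr Hball]].
      destruct (rn_ball_comb n a b s r Hr Ha Hb) as [d [Hd Hnear]].
      set (u := Rmax 0 (s - d / 2)).
      assert (Hu : 0 <= u < s /\ Rabs (u - s) < d)
        by (unfold u, Rmax; destruct (Rle_dec 0 (s - d / 2)); split; try apply Rabs_def1; lra).
      apply (Hdis (comb a b u)); [apply Hcv; auto; lra|apply below; lra|apply Hball, Hnear; lra].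
Qed.

Lemma rn_component_of_open n (S Cc : set_Rn) :
  (forall x, S x -> inRn n x) -> (exists x, Cc x) -> (forall x, Cc x -> S x) ->
  rn_connected n Cc -> rn_open n Cc ->
  (forall x, rn_closure n Cc x -> S x -> Cc x) -> rn_component n S Cc.
Proof.
  intros HSin Hne HCS Hconn Hopen Hclosed.
  split; [exact Hne|split; [exact HCS|split; [exact Hconn|]]].
  intros T HT HCT HTS x Tx; apply NNPP; intros Hx; apply HT.
  set (V := fun y => exists r, 0 < r /\ forall w, rn_ball n y r w -> ~ Cc w).
  assert (Hcov : forall y, T y -> Cc y \/ V y).
  { intros y Ty; destruct (classic (Cc y)) as [|Hny]; [left; assumption|right].
    apply NNPP; intros HnV; apply Hny, Hclosed; [|apply HTS, Ty].
    split; [apply HSin, HTS, Ty|]; intros r Hr; apply NNPP; intros Hno.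
    apply HnV; exists r; split; [exact Hr|]; intros w Hw Cw; apply Hno; exists w; auto. }
  exists Cc, V; split; [exact Hopen|split; [|split; [exact Hcov|split; [|split]]]].
  - intros y [r [Hr Hb]]; exists (r / 2); split; [lra|].
    intros w [Hw Hwy]; exists (r / 2); split; [lra|].
    intros w' [Hw' Hw'w]; apply Hb; split; [exact Hw'|]; intros i Hi.
    specialize (Hwy i Hi); specialize (Hw'w i Hi).
    replace (w' i - y i) with ((w' i - w i) + (w i - y i)) by ring.
    pose proof (Rabs_triang (w' i - w i) (w i - y i)); lra.
  - destruct Hne as [y Hy]; exists y; split; [apply HCT|]; exact Hy.
  - exists x; split; [exact Tx|]; destruct (Hcov x Tx); [contradiction|assumption].
  - intros y _ Hy [r [Hr Hb]]; apply (Hb y); [|exact Hy].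
    apply rn_ball_center; [apply HSin, HCS|]; assumption.
Qed.

Lemma rn_strictly_convex_of_midpoint n (Cc : set_Rn) :
  rn_open n Cc -> rn_convex n Cc ->
  (forall a b i, (i < n)%nat -> a i <> b i ->
     rn_closure n Cc a -> rn_closure n Cc b -> Cc (comb a b (1 / 2))) ->
  rn_strictly_convex n Cc.
Proof.
  intros Hopen Hconv Hmid; split; [exact Hconv|].
  intros [a [b [Ha [Hb [[i [Hi Hab]] Hbd]]]]].
  destruct (Hbd 0) as [Hca _]; [lra|]; rewrite comb0 in Hca.
  destruct (Hbd 1) as [Hcb _]; [lra|]; rewrite comb1 in Hcb.
  destruct (Hbd (1 / 2)) as [[Hm _] Hnint]; [lra|].
  apply Hnint; split; [exact Hm|]; apply Hopen, (Hmid a b i); assumption.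
Qed.

(** * Convexity of balls and of hyperboloid sheets *)

Lemma sqnorm_comb_sub n a b t :
  sqnorm n (comb a b t) =
  (1 - t) * sqnorm n a + t * sqnorm n b - (1 - t) * t * (sqnorm n a - 2 * dot n a b + sqnorm n b).
Proof. rewrite sqnorm_comb; ring. Qed.

Lemma sqnorm_comb_lt n r a b t :
  sqnorm n a < r -> sqnorm n b < r -> 0 <= t <= 1 -> sqnorm n (comb a b t) < r.
Proof.
  intros Ha Hb Ht; rewrite sqnorm_comb_sub.
  pose proof (sqnorm_nonneg n (fun i => a i - b i)) as Hd; rewrite sqnorm_sub in Hd.
  assert (0 <= (1 - t) * t) by nra.
  assert ((1 - t) * sqnorm n a <= (1 - t) * r) by (apply Rmult_le_compat_l; lra).
  destruct (Req_dec t 0) as [->|Ht0]; [lra|].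
  assert (t * sqnorm n b < t * r) by (apply Rmult_lt_compat_l; lra).
  nra.
Qed.

Lemma sqnorm_midpoint_lt n r a b i : (i < n)%nat -> a i <> b i ->
  sqnorm n a <= r -> sqnorm n b <= r -> sqnorm n (comb a b (1 / 2)) < r.
Proof.
  intros Hi Hab Ha Hb; rewrite sqnorm_comb_sub.
  pose proof (sqnorm_sub_pos n a b i Hi Hab); lra.
Qed.

Definition affine_on_segments (l : (nat -> R) -> R) : Prop :=
  forall a b t, l (comb a b t) = (1 - t) * l a + t * l b.

Definition hyperboloid_lt (n : nat) (e : R) (l : (nat -> R) -> R) (y : nat -> R) : Prop :=
  0 < l y /\ 1 + e * sqnorm n y < l y * l y.
Definition hyperboloid_le (n : nat) (e : R) (l : (nat -> R) -> R) (y : nat -> R) : Prop :=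
  0 <= l y /\ 1 + e * sqnorm n y <= l y * l y.

Lemma le_of_sq_le p q : 0 <= p -> q * q <= p * p -> q <= p.
Proof. intros; nra. Qed.

Lemma lt_of_sq_lt p q : 0 <= p -> q * q < p * p -> q < p.
Proof. intros; nra. Qed.

Lemma one_plus_dot_gap n e u v :
  (1 + e * sqnorm n u) * (1 + e * sqnorm n v) - (1 + e * dot n u v) * (1 + e * dot n u v) =
  e * (sqnorm n u - 2 * dot n u v + sqnorm n v)
  + e * e * (sqnorm n u * sqnorm n v - dot n u v * dot n u v).
Proof. ring. Qed.

(** [1 + e <u,v>] is the inner product of [(1, sqrt e u)] and [(1, sqrt e v)], so it is at
    most the product of their norms, hence at most [a b]; strictly so when [u <> v]. *)
Lemma reverse_cauchy_schwarz n e u v a b :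
  0 <= e -> 0 <= a -> 0 <= b ->
  1 + e * sqnorm n u <= a * a -> 1 + e * sqnorm n v <= b * b ->
  1 + e * dot n u v <= a * b.
Proof.
  intros He Ha Hb Hu Hv.
  pose proof (one_plus_dot_gap n e u v) as Hgap.
  pose proof (sqnorm_nonneg n (fun i => u i - v i)) as Hd; rewrite sqnorm_sub in Hd.
  pose proof (cauchy_schwarz n u v).
  pose proof (sqnorm_nonneg n u); pose proof (sqnorm_nonneg n v).
  assert (0 <= e * (sqnorm n u - 2 * dot n u v + sqnorm n v)) by nra.
  assert (0 <= e * e * (sqnorm n u * sqnorm n v - dot n u v * dot n u v)) by nra.
  assert ((1 + e * sqnorm n u) * (1 + e * sqnorm n v) <= (a * a) * (b * b))
    by (apply Rmult_le_compat; nra).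
  apply le_of_sq_le; [nra|]; replace ((a * b) * (a * b)) with ((a * a) * (b * b)) by ring; lra.
Qed.

Lemma reverse_cauchy_schwarz_strict n e u v a b i :
  0 < e -> (i < n)%nat -> u i <> v i -> 0 <= a -> 0 <= b ->
  1 + e * sqnorm n u <= a * a -> 1 + e * sqnorm n v <= b * b ->
  1 + e * dot n u v < a * b.
Proof.
  intros He Hi Huv Ha Hb Hu Hv.
  pose proof (one_plus_dot_gap n e u v) as Hgap.
  pose proof (sqnorm_sub_pos n u v i Hi Huv).
  pose proof (cauchy_schwarz n u v).
  pose proof (sqnorm_nonneg n u); pose proof (sqnorm_nonneg n v).
  assert (0 < e * (sqnorm n u - 2 * dot n u v + sqnorm n v)) by nra.
  assert (0 <= e * e * (sqnorm n u * sqnorm n v - dot n u v * dot n u v)) by nra.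
  assert ((1 + e * sqnorm n u) * (1 + e * sqnorm n v) <= (a * a) * (b * b))
    by (apply Rmult_le_compat; nra).
  apply lt_of_sq_lt; [nra|]; replace ((a * b) * (a * b)) with ((a * a) * (b * b)) by ring; lra.
Qed.

Lemma hyperboloid_comb_identity n e u v a b t :
  ((1 - t) * a + t * b) * ((1 - t) * a + t * b) - (1 + e * sqnorm n (comb u v t)) =
  (1 - t) * (1 - t) * (a * a - 1 - e * sqnorm n u) + t * t * (b * b - 1 - e * sqnorm n v)
  + 2 * (1 - t) * t * (a * b - 1 - e * dot n u v).
Proof. rewrite sqnorm_comb; ring. Qed.

Lemma hyperboloid_lt_convex n e l a b t : 0 <= e -> affine_on_segments l ->
  hyperboloid_lt n e l a -> hyperboloid_lt n e l b -> 0 <= t <= 1 ->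
  hyperboloid_lt n e l (comb a b t).
Proof.
  intros He Hl [Ha Ha2] [Hb Hb2] Ht; unfold hyperboloid_lt; rewrite Hl.
  pose proof (hyperboloid_comb_identity n e a b (l a) (l b) t).
  pose proof (reverse_cauchy_schwarz n e a b (l a) (l b) He).
  assert (0 <= 2 * (1 - t) * t) by nra.
  split; [nra|].
  destruct (Req_dec t 0) as [->|Ht0]; [nra|].
  assert (0 < t * t) by nra.
  assert (0 <= (1 - t) * (1 - t)) by nra.
  nra.
Qed.

Lemma hyperboloid_le_midpoint n e l a b i : 0 < e -> affine_on_segments l ->
  (i < n)%nat -> a i <> b i ->
  hyperboloid_le n e l a -> hyperboloid_le n e l b -> hyperboloid_lt n e l (comb a b (1 / 2)).
Proof.
  intros He Hl Hi Hab [Ha Ha2] [Hb Hb2]; unfold hyperboloid_lt; rewrite Hl.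
  pose proof (hyperboloid_comb_identity n e a b (l a) (l b) (1 / 2)).
  pose proof (reverse_cauchy_schwarz_strict n e a b (l a) (l b) i He Hi Hab Ha Hb Ha2 Hb2).
  pose proof (sqnorm_nonneg n a); pose proof (sqnorm_nonneg n b).
  assert (0 < l a) by nra.
  split; nra.
Qed.

(** * The components *)

Definition sgn (k j : nat) : R := if Nat.leb k j then 1 else -1.

Lemma sgn_sq k j : sgn k j * sgn k j = 1.
Proof. unfold sgn; destruct (Nat.leb k j); ring. Qed.

Lemma sgn_mul_sq k j x : sgn k j * x * (sgn k j * x) = x * x.
Proof. transitivity (sgn k j * sgn k j * (x * x)); [ring|rewrite sgn_sq; ring]. Qed.

Lemma affine_sgn_ell k j : affine_on_segments (fun y => sgn k j * ell j y).
Proof. intros a b t; unfold ell, comb; ring. Qed.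

Section Region.

Variables n K : nat.
Hypothesis hn : (2 <= n)%nat.

Definition region (k : nat) : set_Rn := fun y =>
  inRn n y /\ sqnorm n y < radius K /\
  forall j, (j < K)%nat -> hyperboloid_lt n (eps K) (fun w => sgn k j * ell j w) y.

Lemma continuous_at_sgn_ell k j x : continuous_at n (fun y => sgn k j * ell j y) x.
Proof.
  unfold ell; apply continuous_at_mult; [apply continuous_at_const|].
  apply continuous_at_minus; apply continuous_at_mult;
    (apply continuous_at_const || apply continuous_at_coord; lia).
Qed.

Lemma continuous_at_hyperboloid_gap k j x :
  continuous_at n (fun y => sgn k j * ell j y * (sgn k j * ell j y) - (1 + eps K * sqnorm n y)) x.
Proof.
  apply continuous_at_minus; [apply continuous_at_mult; apply continuous_at_sgn_ell|].
  apply continuous_at_plus; [apply continuous_at_const|].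
  apply continuous_at_mult; [apply continuous_at_const|apply continuous_at_sqnorm].
Qed.

Lemma continuous_at_radius_gap x : continuous_at n (fun y => radius K - sqnorm n y) x.
Proof. apply continuous_at_minus; [apply continuous_at_const|apply continuous_at_sqnorm]. Qed.

Lemma region_open k : rn_open n (region k).
Proof.
  intros y [Hy [Hr Hj]].
  destruct (continuous_at_pos n _ y (continuous_at_radius_gap y)) as [r1 [Hr1 H1]]; [lra|].
  destruct (nbhd_forall_lt n y (fun j => hyperboloid_lt n (eps K) (fun w => sgn k j * ell j w)) K)
    as [r2 [Hr2 H2]].
  { intros j Hjk; destruct (Hj j Hjk) as [Hpos Hgap].
    destruct (continuous_at_pos n _ y (continuous_at_sgn_ell k j y) Hpos) as [ra [Hra Ha]].
    destruct (continuous_at_pos n _ y (continuous_at_hyperboloid_gap k j y)) as [rb [Hrb Hb]];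
      [lra|].
    exists (Rmin ra rb); split; [apply Rmin_pos; auto|].
    intros w Hw; apply rn_ball_min in Hw as [Hwa Hwb].
    specialize (Hb w Hwb); split; [apply Ha, Hwa|lra]. }
  exists (Rmin r1 r2); split; [apply Rmin_pos; auto|].
  intros w Hw; pose proof Hw as [Hwin _]; apply rn_ball_min in Hw as [Hw1 Hw2].
  specialize (H1 w Hw1); split; [exact Hwin|split; [lra|apply H2, Hw2]].
Qed.

Lemma region_closure k x : rn_closure n (region k) x ->
  sqnorm n x <= radius K /\
  forall j, (j < K)%nat -> hyperboloid_le n (eps K) (fun w => sgn k j * ell j w) x.
Proof.
  intros Hc; split.
  - enough (0 <= radius K - sqnorm n x) by lra.
    apply (closure_nonneg n (region k) _ x (continuous_at_radius_gap x)); [|exact Hc].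
    intros y [_ [Hy _]]; lra.
  - intros j Hj; split.
    + apply (closure_nonneg n (region k) _ x (continuous_at_sgn_ell k j x)); [|exact Hc].
      intros y [_ [_ Hy]]; apply Hy, Hj.
    + enough (0 <= sgn k j * ell j x * (sgn k j * ell j x) - (1 + eps K * sqnorm n x)) by lra.
      apply (closure_nonneg n (region k) _ x (continuous_at_hyperboloid_gap k j x)); [|exact Hc].
      intros y [_ [_ Hy]]; destruct (Hy j Hj); lra.
Qed.

Lemma region_convex k : rn_convex n (region k).
Proof.
  intros a b t [Ha [Har Haj]] [Hb [Hbr Hbj]] Ht.
  split; [apply inRn_comb; auto|split; [apply sqnorm_comb_lt; auto|]].
  intros j Hj; apply hyperboloid_lt_convex; auto.
  - apply Rlt_le, eps_pos.
  - apply affine_sgn_ell.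
Qed.

Lemma region_strictly_convex k : rn_strictly_convex n (region k).
Proof.
  apply rn_strictly_convex_of_midpoint; [apply region_open|apply region_convex|].
  intros a b i Hi Hab Hca Hcb.
  destruct (region_closure k a Hca) as [Har Haj], (region_closure k b Hcb) as [Hbr Hbj].
  split; [apply inRn_comb; [apply Hca|apply Hcb]|split].
  - apply (sqnorm_midpoint_lt n _ a b i); assumption.
  - intros j Hj; apply (hyperboloid_le_midpoint n _ _ a b i); auto.
    + apply eps_pos.
    + apply affine_sgn_ell.
Qed.

Lemma region_bounded k : rn_bounded n (region k).
Proof. apply (rn_bounded_of_sqnorm_lt n _ (radius K)); intros y [_ [Hy _]]; exact Hy. Qed.

Lemma region_not_imag_proj k y : region k y -> ~ imag_proj n (fpoly n K) y.
Proof.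
  intros [_ [Hr Hj]] HI.
  destruct (imag_proj_fpoly_bound n K y hn HI) as [Hb|[j [Hjk Hb]]]; [lra|].
  destruct (Hj j Hjk) as [_ Hgap]; rewrite sgn_mul_sq in Hgap; lra.
Qed.

(** A boundary point lies on the sphere or on one of the hyperbolas; [sgn k j * ell j]
    cannot vanish there because its square is at least [1]. *)
Lemma region_boundary_imag_proj k x :
  rn_closure n (region k) x -> ~ region k x -> imag_proj n (fpoly n K) x.
Proof.
  intros Hc Hnot; destruct (region_closure k x Hc) as [Hr Hj].
  apply imag_proj_fpoly_of_eq; [exact hn|apply Hc|].
  apply NNPP; intros Hne; apply Hnot.
  split; [apply Hc|split].
  { assert (sqnorm n x <> radius K) by (intros E; apply Hne; left; exact E); lra. }
  intros j Hjk; destruct (Hj j Hjk) as [Hpos Hgap].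
  assert (Hneq : 1 + eps K * sqnorm n x <> sgn k j * ell j x * (sgn k j * ell j x)).
  { rewrite sgn_mul_sq; intros Heq; apply Hne; right; exists j; split; [exact Hjk|lra]. }
  pose proof (eps_pos K); pose proof (sqnorm_nonneg n x).
  split; [|lra].
  destruct Hpos as [|Hzero]; [assumption|].
  rewrite <- Hzero in Hgap; nra.
Qed.

Lemma region_component k : (exists x, region k x) ->
  rn_component n (compl_imag_proj n (fpoly n K)) (region k).
Proof.
  intros Hne; apply rn_component_of_open; [intros x Hx; apply Hx|exact Hne| | | |].
  - intros x Hx; split; [apply Hx|exact (region_not_imag_proj k x Hx)].
  - apply convex_connected; [intros x Hx; apply Hx|apply region_convex].
  - apply region_open.
  - intros x Hc [_ HnI]; apply NNPP; intros Hnot.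
    exact (HnI (region_boundary_imag_proj k x Hc Hnot)).
Qed.

(** [ell_j (witness k) = 4 (j - k) + 2], so [|ell_j| >= 2] with the sign of [j - k + 1/2],
    while [1 + eps |witness k|^2 <= 3]. *)
Definition witness (k : nat) : nat -> R :=
  fun i => match i with O => 2 | 1%nat => 2 * INR k | _ => 0 end.

Lemma witness_in_region k : (k < K)%nat -> region k (witness k).
Proof.
  intros Hk.
  assert (HN : sqnorm n (witness k) = 4 + 4 * (INR k * INR k)).
  { unfold sqnorm; rewrite rsum_first_two; [simpl; ring|exact hn|].
    intros [|[|i]] Hi; [lia|lia|simpl; ring]. }
  assert (HkK : INR k + 1 <= INR K) by (rewrite <- S_INR; apply le_INR; lia).
  pose proof (pos_INR k).
  assert (Heps : eps K * (4 + 4 * (INR k * INR k)) <= 2).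
  { pose proof (eps_pos K).
    assert (eps K * (2 * (1 + INR K * INR K)) = 1)
      by (unfold eps; apply Rinv_l; pose proof (pos_INR K); nra).
    assert (eps K * (4 + 4 * (INR k * INR k)) <= eps K * (4 + 4 * (INR K * INR K)))
      by (apply Rmult_le_compat_l; nra).
    nra. }
  split; [intros [|[|i]] Hi; [lia|lia|reflexivity]|split].
  - rewrite HN; unfold radius; nra.
  - intros j Hj; unfold hyperboloid_lt; rewrite HN.
    assert (Hsgn : 2 <= sgn k j * ell j (witness k)).
    { unfold sgn, ell, witness; destruct (Nat.leb_spec k j) as [Hl|Hl].
      - apply le_INR in Hl; lra.
      - assert (INR j + 1 <= INR k) by (rewrite <- S_INR; apply le_INR; lia); lra. }
    split; nra.
Qed.

End Region.

Lemma region_sgn_ell_pos n K k j x : (j < K)%nat -> region n K k x -> 0 < sgn k j * ell j x.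
Proof. intros Hj [_ [_ H]]; apply H, Hj. Qed.

Lemma regions_disjoint n K k l x : (k < K)%nat -> (l < K)%nat -> k <> l ->
  region n K k x -> region n K l x -> False.
Proof.
  intros Hk Hl Hkl Rk Rl.
  assert (Hsep : forall p q, (p < q < K)%nat -> region n K p x -> region n K q x -> False).
  { intros p q Hpq Rp Rq.
    pose proof (region_sgn_ell_pos n K p p x ltac:(lia) Rp) as Hp.
    pose proof (region_sgn_ell_pos n K q p x ltac:(lia) Rq) as Hq.
    unfold sgn in Hp, Hq.
    rewrite Nat.leb_refl in Hp; rewrite (proj2 (Nat.leb_gt q p)) in Hq by lia; lra. }
  destruct (Nat.lt_total k l) as [H|[H|H]];
    [exact (Hsep k l ltac:(lia) Rk Rl)|contradiction|exact (Hsep l k ltac:(lia) Rl Rk)].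
Qed.

Theorem theorem1p3 (n : nat) (hn : (2 <= n)%nat) (K : nat) (hK : (0 < K)%nat) :
  exists f : mpoly,
  exists Cs : nat -> set_Rn,
    (forall k, (k < K)%nat ->
       rn_component n (compl_imag_proj n f) (Cs k) /\
       rn_bounded n (Cs k) /\ rn_strictly_convex n (Cs k)) /\
    (forall k l, (k < K)%nat -> (l < K)%nat -> k <> l ->
       forall x, Cs k x -> Cs l x -> False).
Proof.
  exists (fpoly n K), (region n K); split.
  - intros k Hk; split; [|split].
    + apply region_component; [exact hn|].
      exists (witness k); apply witness_in_region; assumption.
    + apply region_bounded.
    + apply region_strictly_convex; exact hn.
  - intros k l Hk Hl Hkl x; exact (regions_disjoint n K k l x Hk Hl Hkl).
Qed.
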